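(* In the setting (R), fix $x\in\mathbb{R}^n$. Then $v_{\lambda,\mu}+w_{\lambda,\mu}\to x$ as $\lambda,\mu\to0^+$; consequently $u_{\lambda,\mu}-v_{\lambda,\mu}\to0$, so that along any sequence $(\lambda_k,\mu_k)$ with $\lambda_k,\mu_k>0$ converging to $(0,0)$, the cluster points of $(v_{\lambda_k,\mu_k})_k$ and of $(u_{\lambda_k,\mu_k})_k$ coincide. Moreover, every such cluster point belongs to $U(x)$.
   Context: Setting (R): Let $F_1=\|\cdot\|$ and $F_2=|||\cdot|||$ be two norms on $\mathbb{R}^n$, with dual norms $\|\cdot\|_*$ and $|||\cdot|||_*$, so that $F_2^*(y)=I\{|||y|||_*\le1\}$ (indicator: $0$ if $|||y|||_*\le1$, $+\infty$ otherwise). For $x\in\mathbb{R}^n$ define $S(x)=\min_{u\in\mathbb{R}^n}F_1(u)+F_2^*(x-u)$ and $U(x)=\arg\min_{u\in\mathbb{R}^n}F_1(u)+F_2^*(x-u)$. For $\lambda,\mu>0$, problem (P) is $$\min_{v,w\in\mathbb{R}^n}\ F_1(v)+\frac{\lambda}{2}\|v\|_2^2+F_2^*(w)+\frac{1}{2\mu}\|x-v-w\|_2^2,$$ which has a unique minimizer denoted $(v_{\lambda,\mu},w_{\lambda,\mu})$; its minimal value is denoted $S_{\lambda,\mu}(x)$; set $u_{\lambda,\mu}=x-w_{\lambda,\mu}$. *)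

From mathcomp Require Import ssreflect ssrfun ssrbool eqtype ssrnat seq fintype bigop.
From Stdlib Require Import Reals.
Open Scope R_scope.

Definition vec (n : nat) := 'I_n -> R.

Definition vadd {n} (a b : vec n) : vec n := fun i => a i + b i.
Definition vsub {n} (a b : vec n) : vec n := fun i => a i - b i.
Definition vscale {n} (c : R) (a : vec n) : vec n := fun i => c * a i.
Definition vzero {n} : vec n := fun _ => 0.

Definition dot {n} (a b : vec n) : R := \big[Rplus/0]_(i < n) (a i * b i).
Definition norm2 {n} (a : vec n) : R := sqrt (dot a a).

Definition is_norm {n} (N : vec n -> R) : Prop :=
  (forall a, 0 <= N a) /\
  (forall a, N a = 0 -> a = vzero) /\
  (forall c a, N (vscale c a) = Rabs c * N a) /\
  (forall a b, N (vadd a b) <= N a + N b).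

Definition is_dual_norm {n} (N Nd : vec n -> R) : Prop :=
  forall y, is_lub (fun t => exists a, N a <= 1 /\ t = dot a y) (Nd y).

(* Objective of problem (P), with F2^* = indicator of the dual unit ball
   (F2^*(w) = 0 if Nd2 w <= 1, +oo otherwise), so (P) is the minimization
   over the feasible set { (v,w) : Nd2 w <= 1 } of the finite part below. *)
Definition P_obj {n} (F1 : vec n -> R) (lam mu : R) (x v w : vec n) : R :=
  F1 v + lam / 2 * (norm2 v) ^ 2 + 1 / (2 * mu) * (norm2 (vsub (vsub x v) w)) ^ 2.

Definition is_P_minimizer {n} (F1 Nd2 : vec n -> R) (lam mu : R) (x v w : vec n) : Prop :=
  Nd2 w <= 1 /\
  forall v' w', Nd2 w' <= 1 -> P_obj F1 lam mu x v w <= P_obj F1 lam mu x v' w'.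

(* u \in U(x) = argmin_u F1(u) + F2^*(x - u) *)
Definition in_U {n} (F1 Nd2 : vec n -> R) (x u : vec n) : Prop :=
  Nd2 (vsub x u) <= 1 /\
  forall u', Nd2 (vsub x u') <= 1 -> F1 u <= F1 u'.

Definition cluster_point {n} (a : nat -> vec n) (p : vec n) : Prop :=
  forall eps, 0 < eps -> forall N : nat, exists k : nat, (N <= k)%nat /\ norm2 (vsub (a k) p) < eps.

From HB Require Import structures.
From mathcomp Require Import ssreflect ssrfun ssrbool eqtype ssrnat seq fintype bigop.
From Stdlib Require Import Reals Lra Psatz FunctionalExtensionality.
Open Scope R_scope.
Set Implicit Arguments.

(* Write r = x - v - w for the residual of a minimizer (v, w) of (P).
   Comparing the optimal value with the feasible pair (x, 0) gives
   |r|^2 <= mu (2 F1(x) + |x|^2) whenever lam <= 1, so r -> 0; since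
   v + w - x = -r and u - v = r, the first two claims follow, and along any
   sequence (lam_k, mu_k) -> (0,0) the sequences v_k and u_k become close,
   hence share their cluster points.  Let p be such a cluster point.
   Feasibility: x - u_k = w_k lies in the dual unit ball, which is closed,
   so x - p lies in it too.  Optimality: comparing with the feasible pair
   (u', x - u') gives F1(v_k) <= F1(u') + lam_k/2 |u'|^2, and F1 is
   Lipschitz for the Euclidean norm, so F1(p) <= F1(u'). *)

(* Finite sums of reals are iterated [Rplus]; this makes the generic [bigop]
   theory (splitting, reindexing, singling out an index) available. *)
HB.instance Definition _ :=
  Monoid.isComLaw.Build R 0 Rplus
    (fun a b c => esym (Rplus_assoc a b c)) Rplus_comm Rplus_0_l.

Lemma sumZ n (f : 'I_n -> R) c :
  \big[Rplus/0]_(i < n) (c * f i) = c * \big[Rplus/0]_(i < n) f i.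
Proof. by elim/big_rec2: _ => [|i y1 y2 _ ->]; ring. Qed.

Lemma sum_le n (f g : 'I_n -> R) :
  (forall i, f i <= g i) -> \big[Rplus/0]_(i < n) f i <= \big[Rplus/0]_(i < n) g i.
Proof. by move=> fg; elim/big_rec2: _ => [|i y1 y2 _ Hy]; [lra | have := fg i; lra]. Qed.

Section Euclidean.
Variable n : nat.
Implicit Types a b c : vec n.

Lemma dot_ext a b c (d : vec n) :
  (forall i, a i * b i = c i * d i) -> dot a b = dot c d.
Proof. by move=> E; apply: eq_bigr => i _; exact: E. Qed.

Lemma dot_ge0 a : 0 <= dot a a.
Proof. by apply: big_ind => [|s t|i _]; [lra | lra | nra]. Qed.

Lemma dot_sub a b c : dot a (vsub b c) = dot a b - dot a c.
Proof.
have E : dot a (vsub b c) + dot a c = dot a b.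
  by rewrite /dot -big_split; apply: eq_bigr => i _; rewrite /vsub /=; ring.
lra.
Qed.

Lemma dot_expand a b t :
  dot (fun i => a i + t * b i) (fun i => a i + t * b i)
  = dot a a + 2 * t * dot a b + t * t * dot b b.
Proof.
rewrite /dot (eq_bigr (fun i => a i * a i + ((2 * t) * (a i * b i) + (t * t) * (b i * b i)))).
  by rewrite !big_split /= !sumZ Rplus_assoc.
by move=> i _; ring.
Qed.

Lemma norm2_ge0 a : 0 <= norm2 a.
Proof. exact: sqrt_pos. Qed.

Lemma norm2_sq a : norm2 a * norm2 a = dot a a.
Proof. by rewrite /norm2 sqrt_sqrt //; exact: dot_ge0. Qed.

Lemma norm2_ext a b : (forall i, a i * a i = b i * b i) -> norm2 a = norm2 b.
Proof. by move=> E; rewrite /norm2 (@dot_ext a a b b E). Qed.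

Lemma norm2_zero a : (forall i, a i = 0) -> norm2 a = 0.
Proof. by move=> E; rewrite /norm2 /dot big1 ?sqrt_0 // => i _; rewrite E; ring. Qed.

Lemma norm2_sym a b : norm2 (vsub a b) = norm2 (vsub b a).
Proof. by apply: norm2_ext => i; rewrite /vsub; ring. Qed.

End Euclidean.

Lemma nonneg_quadratic_discr (A B C : R) :
  0 <= C -> (forall t, 0 <= A + 2 * t * B + t * t * C) -> B * B <= A * C.
Proof.
move=> C_ge0 nonneg.
case: (Rle_lt_or_eq_dec 0 C C_ge0) => [C_gt0 | C_eq0].
  have := nonneg (- B / C).
  have -> : A + 2 * (- B / C) * B + - B / C * (- B / C) * C = (A * C - B * B) / C
    by field; lra.
  move=> H; have : 0 <= (A * C - B * B) / C * C by apply: Rmult_le_pos; lra.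
  have -> : (A * C - B * B) / C * C = A * C - B * B by field; lra.
  lra.
rewrite -C_eq0; case: (Req_dec B 0) => [-> | B_neq0]; first lra.
have := nonneg (- (A + 1) / (2 * B)).
have -> : A + 2 * (- (A + 1) / (2 * B)) * B + - (A + 1) / (2 * B) * (- (A + 1) / (2 * B)) * C
          = - 1 by rewrite -C_eq0; field.
lra.
Qed.

Lemma cauchy_schwarz n (a b : vec n) : dot a b <= norm2 a * norm2 b.
Proof.
have discr : dot a b * dot a b <= dot a a * dot b b.
  apply: nonneg_quadratic_discr; first exact: dot_ge0.
  by move=> t; rewrite -dot_expand; exact: dot_ge0.
apply: Rle_trans (Rle_abs _) _.
rewrite /norm2 -sqrt_mult_alt; last exact: dot_ge0.
rewrite -sqrt_Rsqr_abs.
by apply: sqrt_le_1_alt; rewrite /Rsqr.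
Qed.

Lemma norm2_triangle n (a b : vec n) : norm2 (vadd a b) <= norm2 a + norm2 b.
Proof.
have E : dot (vadd a b) (vadd a b) = dot a a + 2 * 1 * dot a b + 1 * 1 * dot b b.
  by rewrite -dot_expand; apply: dot_ext => i; rewrite /vadd; ring.
have := cauchy_schwarz a b; have := norm2_sq a; have := norm2_sq b.
have := norm2_ge0 a; have := norm2_ge0 b => ? ? ? ? ?.
rewrite {1}/norm2 -(sqrt_square (norm2 a + norm2 b)); last lra.
by apply: sqrt_le_1_alt; rewrite E; nra.
Qed.

Lemma norm2_dist_triangle n (a b c : vec n) :
  norm2 (vsub a c) <= norm2 (vsub a b) + norm2 (vsub b c).
Proof.
rewrite (@norm2_ext _ (vsub a c) (vadd (vsub a b) (vsub b c))); first exact: norm2_triangle.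
by move=> i; rewrite /vsub /vadd; ring.
Qed.

Lemma coord_le_norm2 n (a : vec n) j : Rabs (a j) <= norm2 a.
Proof.
have H : a j * a j <= dot a a.
  rewrite /dot (bigD1 j) //=.
  have rest_ge0 : 0 <= \big[Rplus/0]_(i < n | i != j) (a i * a i).
    by apply: big_ind => [|s t|i _]; [lra | lra | nra].
  by rewrite -{1}(Rplus_0_r (a j * a j)); exact: Rplus_le_compat_l.
rewrite -sqrt_Rsqr_abs /norm2; apply: sqrt_le_1_alt; rewrite /Rsqr; lra.
Qed.

Section NormComparison.
Variables (n : nat) (N : vec n -> R).
Hypothesis normN : is_norm N.

Lemma norm_vzero : N vzero = 0.
Proof.
have [_ [_ [homog _]]] := normN.
have -> : (vzero : vec n) = vscale 0 vzero
  by apply: functional_extensionality => i; rewrite /vscale /vzero; ring.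
by rewrite homog Rabs_R0; ring.
Qed.

(* Every norm on R^n is dominated by a multiple of the Euclidean norm:
   expand a in the canonical basis and use the triangle inequality. *)
Lemma norm_le_norm2 : exists C, 0 <= C /\ forall a, N a <= C * norm2 a.
Proof.
have [N_ge0 [_ [homog triangle]]] := normN.
pose e (i : 'I_n) : vec n := fun j => if i == j then 1 else 0.
exists (\big[Rplus/0]_(i < n) N (e i)); split.
  by apply: big_ind => [|s t|i _]; [lra | lra | exact: N_ge0].
move=> a.
have basis_expansion : a = \big[vadd/vzero]_(i < n) vscale (a i) (e i).
  apply: functional_extensionality => j.
  have -> : (\big[vadd/vzero]_(i < n) vscale (a i) (e i)) j
            = \big[Rplus/0]_(i < n) (a i * e i j).
    by apply: (big_rec2 (fun (V : vec n) r => V j = r)) => // i y1 y2 _ <-.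
  by rewrite (bigD1 j) //= /e eqxx big1 => [|i /negbTE ->]; ring.
have subadd : N (\big[vadd/vzero]_(i < n) vscale (a i) (e i))
              <= \big[Rplus/0]_(i < n) N (vscale (a i) (e i)).
  apply: (big_rec2 (fun (V : vec n) r => N V <= r)) => [|i y1 y2 _ Hy].
    by rewrite norm_vzero; lra.
  by have := triangle (vscale (a i) (e i)) y1; lra.
rewrite {1}basis_expansion; apply: Rle_trans subadd _.
rewrite Rmult_comm -sumZ; apply: sum_le => i; rewrite homog.
by have := coord_le_norm2 a i; have := N_ge0 (e i); nra.
Qed.

Lemma norm_lipschitz :
  exists C, 0 <= C /\ forall a b, N a <= N b + C * norm2 (vsub a b).
Proof.
have [_ [_ [_ triangle]]] := normN.
have [C [C_ge0 bound]] := norm_le_norm2.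
exists C; split => // a b.
have split_a : a = vadd b (vsub a b)
  by apply: functional_extensionality => i; rewrite /vadd /vsub; ring.
rewrite {1}split_a; have := triangle b (vsub a b); have := bound (vsub a b).
lra.
Qed.

End NormComparison.

Section DualBall.
Variables (n : nat) (N Nd : vec n -> R).
Hypothesis dualN : is_dual_norm N Nd.

Lemma dual_norm_ub a y : N a <= 1 -> dot a y <= Nd y.
Proof. by move=> Na; case: (dualN y) => ub _; apply: ub; exists a. Qed.

Lemma dual_ball_vzero : Nd vzero <= 1.
Proof.
case: (dualN vzero) => _ lub.
suff : Nd vzero <= 0 by lra.
by apply: lub => t [a [_ ->]]; rewrite /dot big1 => [|i _]; [lra | rewrite /vzero; ring].
Qed.

Lemma dual_ball_closed y :
  (forall eps, 0 < eps -> exists y', Nd y' <= 1 /\ norm2 (vsub y y') < eps) ->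
  Nd y <= 1.
Proof.
move=> approx; case: (dualN y) => _ lub; apply: lub => t [a [Na ->]].
apply: Rle_plus_epsilon => e e_gt0.
have na_ge0 := norm2_ge0 a.
have [y' [y'_in close]] : exists y', Nd y' <= 1 /\ norm2 (vsub y y') < e / (norm2 a + 1).
  by apply: approx; apply: Rdiv_lt_0_compat; lra.
have split_y : dot a y = dot a y' + dot a (vsub y y') by rewrite dot_sub; ring.
have := dual_norm_ub y' Na; have := cauchy_schwarz a (vsub y y').
have := norm2_ge0 (vsub y y').
have : e / (norm2 a + 1) * (norm2 a + 1) = e by field; lra.
nra.
Qed.

End DualBall.

Lemma eventually_lt (s : nat -> R) d :
  Un_cv s 0 -> 0 < d -> exists N, forall k, (N <= k)%nat -> s k < d.
Proof.
move=> cv d_gt0; have [N HN] := cv d d_gt0; exists N => k /leP k_ge.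
by move: (HN k k_ge); rewrite /R_dist Rminus_0_r => /Rabs_def2 [].
Qed.

Lemma vanishes_along (f : R -> R -> R) (lamk muk : nat -> R) :
  (forall k, 0 < lamk k /\ 0 < muk k) -> Un_cv lamk 0 -> Un_cv muk 0 ->
  (forall eps, 0 < eps -> exists delta, 0 < delta /\
     forall lam mu, 0 < lam < delta -> 0 < mu < delta -> f lam mu < eps) ->
  forall eps, 0 < eps -> exists N, forall k, (N <= k)%nat -> f (lamk k) (muk k) < eps.
Proof.
move=> pos cvl cvm f_lim eps eps_gt0.
have [d [d_gt0 Hd]] := f_lim eps eps_gt0.
have [N1 H1] := eventually_lt cvl d_gt0; have [N2 H2] := eventually_lt cvm d_gt0.
exists (maxn N1 N2) => k k_ge; have [? ?] := pos k.
by apply: Hd; split => //; [apply: H1 | apply: H2]; apply: leq_trans k_ge;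
   [exact: leq_maxl | exact: leq_maxr].
Qed.

Lemma cluster_point_close n (a b : nat -> vec n) p :
  (forall e, 0 < e -> exists N, forall k, (N <= k)%nat -> norm2 (vsub (a k) (b k)) < e) ->
  cluster_point a p -> cluster_point b p.
Proof.
move=> close cl_a eps eps_gt0 N.
have [N1 H1] := close (eps / 2) ltac:(lra).
have [k [k_ge ak_near]] := cl_a (eps / 2) ltac:(lra) (maxn N N1).
exists k; split; first exact: leq_trans (leq_maxl _ _) k_ge.
have := norm2_dist_triangle (b k) (a k) p; rewrite (norm2_sym (b k) (a k)).
by have := H1 k (leq_trans (leq_maxr _ _) k_ge); lra.
Qed.

(* A norm is bounded at a cluster point by any eventual upper bound of the
   sequence (lower semicontinuity, here from Lipschitz continuity). *)
Lemma cluster_point_norm_le n (N : vec n -> R) (a : nat -> vec n) p c :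
  is_norm N -> cluster_point a p ->
  (forall e, 0 < e -> exists K, forall k, (K <= k)%nat -> N (a k) <= c + e) ->
  N p <= c.
Proof.
move=> normN cl ev; apply: Rle_plus_epsilon => e e_gt0.
have [C [C_ge0 lip]] := norm_lipschitz normN.
have [K HK] := ev (e / 2) ltac:(lra).
have [k [k_ge near]] : exists k, (K <= k)%nat /\ norm2 (vsub (a k) p) < e / (2 * (C + 1)).
  by apply: cl; apply: Rdiv_lt_0_compat; lra.
have := lip p (a k); rewrite norm2_sym; have := HK k k_ge.
have := norm2_ge0 (vsub (a k) p).
have : e / (2 * (C + 1)) * (C + 1) = e / 2 by field; lra.
nra.
Qed.

Definition residual n (x v w : vec n) : vec n := vsub (vsub x v) w.

Section MinimizerEstimates.
Variables (n : nat) (F1 Nd2 : vec n -> R) (x : vec n).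

(* Comparison with the feasible pair (u', x - u'): F1 at the first component
   of a minimizer is at most F1(u') up to the Tikhonov term. *)
Lemma minimizer_F1_le lam mu v w u' :
  0 <= lam -> 0 < mu -> is_P_minimizer F1 Nd2 lam mu x v w ->
  Nd2 (vsub x u') <= 1 ->
  F1 v <= F1 u' + lam / 2 * norm2 u' ^ 2.
Proof.
move=> lam_ge0 mu_gt0 [_ opt] feas; have := opt u' (vsub x u') feas.
rewrite /P_obj (@norm2_zero _ (vsub (vsub x u') (vsub x u'))); last first.
  by move=> i; rewrite /vsub; ring.
have : 0 <= lam / 2 * norm2 v ^ 2 by apply: Rmult_le_pos; [lra | apply: pow2_ge_0].
have : 0 <= 1 / (2 * mu) * norm2 (vsub (vsub x v) w) ^ 2.
  by apply: Rmult_le_pos; [apply: Rlt_le; apply: Rdiv_lt_0_compat; lra | apply: pow2_ge_0].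
have -> : 1 / (2 * mu) * 0 ^ 2 = 0 by ring.
lra.
Qed.

(* Comparison with the feasible pair (x, 0): the squared residual is O(mu). *)
Lemma residual_sq_le (F2 : vec n -> R) lam mu v w :
  is_norm F1 -> is_dual_norm F2 Nd2 -> 0 < lam <= 1 -> 0 < mu ->
  is_P_minimizer F1 Nd2 lam mu x v w ->
  norm2 (residual x v w) ^ 2 <= mu * (2 * F1 x + norm2 x ^ 2).
Proof.
move=> normF1 dual lam_in mu_gt0 [_ opt].
have := opt x vzero (dual_ball_vzero dual).
rewrite /P_obj (@norm2_zero _ (vsub (vsub x x) vzero)); last first.
  by move=> i; rewrite /vsub /vzero; ring.
have [F1_ge0 _] := normF1.
have : 0 <= lam / 2 * norm2 v ^ 2 by apply: Rmult_le_pos; [lra | apply: pow2_ge_0].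
have : lam / 2 * norm2 x ^ 2 <= norm2 x ^ 2 / 2 by have := pow2_ge_0 (norm2 x); nra.
have := F1_ge0 v; rewrite -/(residual x v w).
set R2 := norm2 (residual x v w) ^ 2 => F1v_ge0 x_term_le v_term_ge0 opt_le.
have scaled : 1 / (2 * mu) * R2 <= F1 x + norm2 x ^ 2 / 2 by lra.
have -> : R2 = 2 * mu * (1 / (2 * mu) * R2) by field; lra.
by have := Rmult_le_compat_l (2 * mu) _ _ ltac:(lra) scaled; lra.
Qed.

End MinimizerEstimates.

Lemma residual_vanishes n (F1 F2 Nd2 : vec n -> R) (x : vec n) (v w : R -> R -> vec n) :
  is_norm F1 -> is_dual_norm F2 Nd2 ->
  (forall lam mu, 0 < lam -> 0 < mu -> is_P_minimizer F1 Nd2 lam mu x (v lam mu) (w lam mu)) ->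
  forall eps, 0 < eps -> exists delta, 0 < delta /\
    forall lam mu, 0 < lam < delta -> 0 < mu < delta ->
      norm2 (residual x (v lam mu) (w lam mu)) < eps.
Proof.
move=> normF1 dual minim eps eps_gt0.
set K := 2 * F1 x + norm2 x ^ 2.
have K_ge0 : 0 <= K.
  by have [F1_ge0 _] := normF1; have := F1_ge0 x; have := pow2_ge_0 (norm2 x); rewrite /K; lra.
have [min_le1 min_le2] := (Rmin_l 1 (eps * eps / (K + 1)), Rmin_r 1 (eps * eps / (K + 1))).
exists (Rmin 1 (eps * eps / (K + 1))); split.
  by apply: Rmin_glb_lt; [lra | apply: Rdiv_lt_0_compat; nra].
move=> lam mu lam_in mu_in.
have lam_le1 : 0 < lam <= 1 by lra.
have := residual_sq_le normF1 dual lam_le1 (proj1 mu_in)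
          (minim _ _ (proj1 lam_in) (proj1 mu_in)).
rewrite -/K; have := norm2_ge0 (residual x (v lam mu) (w lam mu)).
have : mu * (K + 1) < eps * eps / (K + 1) * (K + 1) by apply: Rmult_lt_compat_r; lra.
have -> : eps * eps / (K + 1) * (K + 1) = eps * eps by field; lra.
nra.
Qed.

Lemma minimizers_F1_eventually n (F1 Nd2 : vec n -> R) (x u' : vec n)
    (lamk muk : nat -> R) (vk wk : nat -> vec n) :
  (forall k, 0 < lamk k /\ 0 < muk k) -> Un_cv lamk 0 ->
  (forall k, is_P_minimizer F1 Nd2 (lamk k) (muk k) x (vk k) (wk k)) ->
  Nd2 (vsub x u') <= 1 ->
  forall e, 0 < e -> exists K, forall k, (K <= k)%nat -> F1 (vk k) <= F1 u' + e.
Proof.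
move=> pos cvl minim feas e e_gt0.
set X := norm2 u' ^ 2; have X_ge0 : 0 <= X by apply: pow2_ge_0.
have [K HK] := eventually_lt cvl (Rdiv_lt_0_compat e (X + 1) e_gt0 ltac:(lra)).
exists K => k k_ge; have [lam_gt0 mu_gt0] := pos k.
have := minimizer_F1_le u' (Rlt_le _ _ lam_gt0) mu_gt0 (minim k) feas; rewrite -/X.
have : lamk k * (X + 1) < e / (X + 1) * (X + 1) by apply: Rmult_lt_compat_r; [lra | exact: HK].
have -> : e / (X + 1) * (X + 1) = e by field; lra.
nra.
Qed.

Theorem lemma5p2 (n : nat) (F1 F2 Nd2 : vec n -> R)
  (hF1 : is_norm F1) (hF2 : is_norm F2) (hNd2 : is_dual_norm F2 Nd2)
  (x : vec n) (v w : R -> R -> vec n)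
  (hvw : forall lam mu, 0 < lam -> 0 < mu ->
           is_P_minimizer F1 Nd2 lam mu x (v lam mu) (w lam mu)) :
  let u := fun lam mu => vsub x (w lam mu) in
  (* v + w -> x as lam, mu -> 0+ *)
  (forall eps, 0 < eps -> exists delta, 0 < delta /\
     forall lam mu, 0 < lam < delta -> 0 < mu < delta ->
       norm2 (vsub (vadd (v lam mu) (w lam mu)) x) < eps) /\
  (* u - v -> 0 as lam, mu -> 0+ *)
  (forall eps, 0 < eps -> exists delta, 0 < delta /\
     forall lam mu, 0 < lam < delta -> 0 < mu < delta ->
       norm2 (vsub (u lam mu) (v lam mu)) < eps) /\
  (* along any positive sequence (lam_k, mu_k) -> (0,0): cluster points of
     (v_k) and (u_k) coincide, and each belongs to U(x) *)
  (forall lamk muk : nat -> R,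
     (forall k, 0 < lamk k /\ 0 < muk k) -> Un_cv lamk 0 -> Un_cv muk 0 ->
     (forall p, cluster_point (fun k => v (lamk k) (muk k)) p <->
                cluster_point (fun k => u (lamk k) (muk k)) p) /\
     (forall p, cluster_point (fun k => v (lamk k) (muk k)) p -> in_U F1 Nd2 x p)).
Proof.
move=> u.
have res_lim := residual_vanishes v w hF1 hNd2 hvw.
have sum_eq lam mu : norm2 (vsub (vadd (v lam mu) (w lam mu)) x)
                     = norm2 (residual x (v lam mu) (w lam mu))
  by apply: norm2_ext => i; rewrite /residual /vsub /vadd; ring.
have diff_eq lam mu : norm2 (vsub (u lam mu) (v lam mu)) = norm2 (residual x (v lam mu) (w lam mu))
  by apply: norm2_ext => i; rewrite /residual /u /vsub; ring.
have diff_lim : forall eps, 0 < eps -> exists delta, 0 < delta /\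
    forall lam mu, 0 < lam < delta -> 0 < mu < delta -> norm2 (vsub (u lam mu) (v lam mu)) < eps
  by move=> eps /res_lim [d [d_gt0 Hd]]; exists d; split => // lam mu *; rewrite diff_eq; exact: Hd.
split.
  by move=> eps /res_lim [d [d_gt0 Hd]]; exists d; split => // lam mu *; rewrite sum_eq; exact: Hd.
split => // lamk muk pos cvl cvm.
have close :=
  vanishes_along (fun lam mu => norm2 (vsub (u lam mu) (v lam mu))) pos cvl cvm diff_lim.
have close_sym : forall e, 0 < e -> exists N, forall k, (N <= k)%nat ->
    norm2 (vsub (v (lamk k) (muk k)) (u (lamk k) (muk k))) < e
  by move=> e /close [N HN]; exists N => k /HN; rewrite norm2_sym.
have same_clusters p : cluster_point (fun k => v (lamk k) (muk k)) p <->
                       cluster_point (fun k => u (lamk k) (muk k)) p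
  by split; apply: cluster_point_close.
split => // p /[dup] cl_v /same_clusters cl_u; split.
- (* x - p is a limit of the feasible w_k = x - u_k *)
  apply: (dual_ball_closed hNd2) => eps /(cl_u _)/(_ 0%nat) [k [_ near]].
  have [lam_gt0 mu_gt0] := pos k.
  exists (w (lamk k) (muk k)); split; first by have [] := hvw _ _ lam_gt0 mu_gt0.
  by rewrite (@norm2_ext _ _ (vsub (u (lamk k) (muk k)) p)) // => i; rewrite /u /vsub; ring.
- move=> u' feas; apply: (cluster_point_norm_le hF1 cl_v).
  apply: (minimizers_F1_eventually u' muk _ (fun k => w (lamk k) (muk k)) pos cvl _ feas).
  by move=> k; have [] := pos k; exact: hvw.
Qed.
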